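(* For a positive integer $\tau$ and $p\in[0,1]$, let \[ R_\tau(p) := \min \mathbb{E}\big[\#\{t\in\{0,1,\dots,\tau\} : X_t = 0\} \,\big|\, X_0 = 0\big], \] where the minimum is over all sequences of instructions, $(X_t)$ being the guided random walk following them. Then for any integers $0\le t_1\le t_2$, any $x\in\mathbb{Z}^2$, and any guided random walk $(X_t)$ (any sequence of instructions, any possibly random initial position $X_0$), \[ \mathbb{P}\big(X_t = x \text{ for some } t\in[t_1,t_2]\big) \le \frac{\mathbb{E}\big[\#\{t\in[t_1,t_2+\tau] : X_t = x\}\big]}{R_\tau(p)}. \]
   Context: Integer intervals $[a,b]$ denote $\{a,a+1,\dots,b\}$. A sequence of instructions is an infinite walk $(x_t)_{t\ge 0}$ in $\mathbb{Z}^2$ with $x_{t+1}-x_t\in\{(\pm1,0),(0,\pm1)\}$. The guided random walk with error probability $p$ following it is the process $(X_t)_{t\ge0}$ whose increments are independent (and independent of $X_0$), with $X_{t+1}-X_t = x_{t+1}-x_t$ with probability $1-p$, and $X_{t+1}-X_t$ uniformly distributed on $\{(\pm1,0),(0,\pm1)\}$ with probability $p$. *)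

From HB Require Import structures.
From mathcomp Require Import all_boot all_order all_algebra.
From mathcomp Require Import all_classical all_reals all_analysis.
Set Implicit Arguments. Unset Strict Implicit. Unset Printing Implicit Defensive.
Import Order.TTheory GRing.Theory Num.Theory.
Local Open Scope ring_scope.
Local Open Scope classical_set_scope.

Definition Z2 := (int * int)%type.

Definition steps : seq Z2 :=
  [:: ((1:int), (0:int)); ((-1:int), (0:int)); ((0:int), (1:int)); ((0:int), (-1:int))].

Definition instruction (x : nat -> Z2) : Prop := forall t, x t.+1 - x t \in steps.

(* Law of the increment X_{t+1}-X_t of the guided random walk following x:
   with prob. 1-p the instructed step x_{t+1}-x_t, with prob. p uniform
   on the four unit steps. *)
Definition step_prob {R : realType} (p : R) (x : nat -> Z2) (t : nat) (d : Z2) : R :=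
  (1 - p) * (d == x t.+1 - x t)%:R + p / 4%:R * (d \in steps)%:R.

Definition partial_sum (tau : nat) (s : {ffun 'I_tau -> 'I_4}) (t : nat) : Z2 :=
  (\sum_(i < tau | (i < t)%N) (nth (0 : Z2) steps (s i) : Z2))%R.

Definition visits0 (tau : nat) (s : {ffun 'I_tau -> 'I_4}) : nat :=
  (\sum_(t < tau.+1) nat_of_bool (partial_sum s t == 0%R))%N.

(* E[ #{t in [0,tau] : X_t = 0} | X_0 = 0 ] for the guided random walk following x,
   computed from the (product) law of the first tau increments. *)
Definition exp_visits0 {R : realType} (p : R) (x : nat -> Z2) (tau : nat) : R :=
  \sum_(s : {ffun 'I_tau -> 'I_4})
     (\prod_(i < tau) step_prob p x i (nth (0 : Z2) steps (s i))) * (visits0 s)%:R.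

(* R_tau(p) : minimum (infimum; it is attained) over all sequences of instructions. *)
Definition Rtau {R : realType} (p : R) (tau : nat) : R :=
  inf [set r | exists x, instruction x /\ r = exp_visits0 p x tau].

Definition guided_random_walk {d : measure_display} {T : measurableType d}
    {R : realType} (P : probability T R) (p : R) (x : nat -> Z2)
    (X : nat -> T -> Z2) : Prop :=
  [/\
      (forall t (A : set Z2), measurable (X t @^-1` A)),
      (forall t (dz : Z2),
          P [set w | X t.+1 w - X t w = dz] = (step_prob p x t dz)%:E) &
      (* X_0, X_1-X_0, X_2-X_1, ... are mutually independent (joint pmf factorises) *)
      (forall (n : nat) (z : Z2) (ds : nat -> Z2),
          P [set w | X 0%N w = z /\ forall i, (i < n)%N -> X i.+1 w - X i w = ds i]
          = (P [set w | X 0%N w = z] *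
             (\prod_(i < n) step_prob p x i (ds i))%:E)%E)].

From HB Require Import structures.
From mathcomp Require Import all_boot all_order all_algebra.
From mathcomp Require Import all_classical all_reals all_analysis.
From mathcomp Require Import measurable_realfun ring zify.
Import Order.TTheory GRing.Theory Num.Theory.
Set Implicit Arguments. Unset Strict Implicit. Unset Printing Implicit Defensive.
Local Open Scope ring_scope.
Local Open Scope classical_set_scope.

(* Decompose the event that X visits z during [t1, t2] according to the first
   visiting time s, the first s increments a of X and the next tau increments
   b.  As X_s = z, the increments a determine X_0 = z - (sum of a), so each
   piece is a cylinder event of X_0 and the increments, whose probability
   factorises by independence; the factor coming from b is the law of the
   first tau steps of the guided walk following t |-> x (s + t).  Summing over
   b, the pieces (s, a) have total mass at least P(visit), and on each of them
   the visits to z during [s, s + tau] have expectation exp_visits0 for these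
   shifted instructions, which is at least R_tau(p).  The first visiting time
   being unique, all these visits are counted once in the number of visits to z
   during [t1, t2 + tau]. *)

Lemma ler_sum_mem (R : numDomainType) (I : eqType) (r : seq I) (F : I -> R) j :
  uniq r -> j \in r -> (forall i, 0 <= F i) -> F j <= \sum_(i <- r) F i.
Proof. by move=> ur jr F0; rewrite (bigD1_seq j) //= lerDl sumr_ge0. Qed.

Lemma ler_sum_fin (R : numDomainType) (I : finType) (F : I -> R) j :
  (forall i, 0 <= F i) -> F j <= \sum_i F i.
Proof. exact: ler_sum_mem (index_enum_uniq I) (mem_index_enum j). Qed.

Lemma leq_sum_window (F : nat -> nat) m n s k : (m <= s)%N -> (s + k <= n)%N ->
  (\sum_(t < k) F (s + t) <= \sum_(m <= t < n) F t)%N.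
Proof.
move=> ms skn.
have -> : (\sum_(t < k) F (s + t) = \sum_(s <= t < s + k) F t)%N.
  rewrite -{2}[s]add0n big_addn addKn big_mkord.
  by apply: eq_bigr => i _; rewrite addnC.
exact: (le_big_nat leqnn (fun u v => leq_addr v u) ms skn).
Qed.

Lemma telescope_shift (V : zmodType) (f : nat -> V) (s t : nat) :
  f (s + t)%N = f s + \sum_(i < t) (f (s + i).+1 - f (s + i)%N).
Proof.
have := telescope_sumr (fun k => f (s + k)%N) (leq0n t).
rewrite big_mkord /= addn0 => telescope.
under eq_bigr do rewrite -addnS.
by rewrite telescope addrC subrK.
Qed.

Lemma nth_steps_inj : injective (fun i : 'I_4 => nth (0 : Z2) steps i).
Proof. by case=> [[|[|[|[|i]]]] Hi] [[|[|[|[|j]]]] Hj] //= _; apply/val_inj. Qed.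

Definition step_index (dz : Z2) : 'I_4 := insubd ord0 (index dz steps).

Lemma nth_step_index dz : dz \in steps -> nth (0 : Z2) steps (step_index dz) = dz.
Proof.
move=> dz_step; rewrite /step_index val_insubd.
by rewrite -[4%N]/(size steps) index_mem dz_step nth_index.
Qed.

Lemma instruction_shift y s : instruction y -> instruction (fun t => y (s + t)%N).
Proof. by move=> y_instr t /=; rewrite addnS. Qed.

Lemma visits0_ge1 n (b : {ffun 'I_n -> 'I_4}) : (1 <= visits0 b)%N.
Proof. by rewrite /visits0 big_ord_recl /partial_sum big_pred0 ?eqxx. Qed.

Section StepLaw.
Variables (R : realType) (p : R).

Lemma sum_step_prob y t : y t.+1 - y t \in steps ->
  \sum_(j < 4) step_prob p y t (nth (0 : Z2) steps j) = 1.
Proof.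
rewrite /step_prob !big_ord_recr big_ord0 /= !inE.
by case/or4P => /eqP -> /=; field.
Qed.

Lemma sum_prod_step_prob y n : instruction y ->
  \sum_(b : {ffun 'I_n -> 'I_4})
    \prod_(i < n) step_prob p y i (nth (0 : Z2) steps (b i)) = 1.
Proof.
move=> y_instr; rewrite -(bigA_distr_bigA
  (fun (i : 'I_n) (j : 'I_4) => step_prob p y i (nth (0 : Z2) steps j))) /=.
by rewrite big1 // => i _; apply: sum_step_prob.
Qed.

Hypothesis p01 : 0 <= p <= 1.

Lemma step_prob_ge0 y t dz : 0 <= step_prob p y t dz.
Proof.
case/andP: p01 => p0 p1.
by rewrite addr_ge0 ?mulr_ge0 ?divr_ge0 ?subr_ge0.
Qed.

Lemma exp_visits0_ge1 y n : instruction y -> 1 <= exp_visits0 p y n.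
Proof.
move=> y_instr; rewrite /exp_visits0 -{1}(sum_prod_step_prob n y_instr).
apply: ler_sum => b _; rewrite ler_peMr ?ler1n ?visits0_ge1 //.
by apply: prodr_ge0 => i _; apply: step_prob_ge0.
Qed.

Lemma Rtau_le y tau : instruction y -> Rtau p tau <= exp_visits0 p y tau.
Proof.
move=> y_instr; apply: ge_inf; last by exists y.
by exists 0 => _ [y' [y'_instr ->]]; apply: le_trans (exp_visits0_ge1 _ y'_instr).
Qed.

Lemma Rtau_ge1 y tau : instruction y -> 1 <= Rtau p tau.
Proof.
move=> y_instr; apply: lb_le_inf; first by exists (exp_visits0 p y tau), y.
by move=> _ [y' [y'_instr ->]]; apply: exp_visits0_ge1.
Qed.

End StepLaw.

Section NonnegIntegrals.
Variables (d : measure_display) (T : measurableType d) (R : realType).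
Variable mu : {measure set T -> \bar R}.

Lemma integral_sum_EFin (I : Type) (r : seq I) (f : I -> T -> R) :
  (forall j, measurable_fun [set: T] (f j)) -> (forall j w, 0 <= f j w) ->
  (\int[mu]_w (\sum_(j <- r) f j w)%:E = \sum_(j <- r) \int[mu]_w (f j w)%:E)%E.
Proof.
move=> mf f0; under eq_integral do rewrite -sumEFin.
by apply: ge0_integral_sum => // j; [apply/measurable_EFinP | move=> w _; rewrite lee_fin].
Qed.

Lemma integral_scale_indic (c : R) (E : set T) : 0 <= c -> measurable E ->
  (\int[mu]_w (c * \1_E w)%:E = c%:E * mu E)%E.
Proof.
move=> c0 mE; under eq_integral do rewrite EFinM.
rewrite ge0_integralZl_EFin ?integral_indic ?setIT //.
exact/measurable_EFinP/measurable_indic.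
Qed.

Lemma measurable_scale_indic (c : R) (E : set T) : measurable E ->
  measurable_fun [set: T] (fun w => c * (\1_E w : R)).
Proof. by move=> mE; apply: measurable_funM => //; apply: measurable_indic. Qed.

End NonnegIntegrals.

Definition steps_of n (a : {ffun 'I_n -> 'I_4}) (i : nat) : Z2 :=
  if insub i is Some j then nth (0 : Z2) steps (a j) else 0.

Lemma steps_of_ord n (a : {ffun 'I_n -> 'I_4}) (i : 'I_n) :
  steps_of a i = nth (0 : Z2) steps (a i).
Proof. by rewrite /steps_of valK. Qed.

Lemma steps_of_lt n (a : {ffun 'I_n -> 'I_4}) i (lt_in : (i < n)%N) :
  steps_of a i = nth (0 : Z2) steps (a (Ordinal lt_in)).
Proof. by rewrite -steps_of_ord. Qed.

Definition displacement n (a : {ffun 'I_n -> 'I_4}) : Z2 := \sum_(i < n) steps_of a i.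

Definition cat_steps s tau (a : {ffun 'I_s -> 'I_4}) (b : {ffun 'I_tau -> 'I_4}) i :=
  if (i < s)%N then steps_of a i else steps_of b (i - s).

Definition first_visit_path t1 s (a : {ffun 'I_s -> 'I_4}) : bool :=
  [forall t : 'I_s, (t1 <= t)%N ==> (\sum_(i < t) steps_of a i != displacement a)].

Section GuidedWalk.
Variables (R : realType) (p : R) (d : measure_display) (T : measurableType d).
Variables (P : probability T R) (x : nat -> Z2) (X : nat -> T -> Z2).
Hypothesis walk : guided_random_walk P p x X.

Lemma measurable_X t A : measurable (X t @^-1` A).
Proof. by case: walk => mX _ _; apply: mX. Qed.

Lemma measurable_increment t dz : measurable [set w | X t.+1 w - X t w = dz].
Proof.
pose v n : Z2 := odflt (0 : Z2) (unpickle n).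
have -> : [set w | X t.+1 w - X t w = dz] =
    \bigcup_n (X t @^-1` [set v n] `&` X t.+1 @^-1` [set v n + dz]).
  apply/seteqP; split => w /=.
  - move=> <-; exists (pickle (X t w)) => //=.
    by rewrite /v pickleK /= addrC subrK.
  - by move=> [n _ [/= -> ->]]; rewrite addrAC subrr add0r.
by apply: bigcupT_measurable => n; apply: measurableI; apply: measurable_X.
Qed.

Lemma measurable_increments y n ds : measurable
  [set w | X 0 w = y /\ forall i, (i < n)%N -> X i.+1 w - X i w = ds i].
Proof.
have -> : [set w | X 0 w = y /\ forall i, (i < n)%N -> X i.+1 w - X i w = ds i] =
    X 0 @^-1` [set y] `&`
    \bigcap_i (if (i < n)%N then [set w | X i.+1 w - X i w = ds i] else setT).
  apply/seteqP; split => w /= [X0 inc]; split => // i.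
  - by move=> _; case: ifP => // /inc.
  - by move=> lt_in; have := inc i I; rewrite lt_in.
apply: measurableI; first exact: measurable_X.
apply: bigcapT_measurable => i.
by case: ifP => _; [apply: measurable_increment | apply: measurableT].
Qed.

Definition step_ok i := [set w | X i.+1 w - X i w \in steps].

Lemma step_okE i : step_ok i =
  [set w | X i.+1 w - X i w = (1, 0)] `|` [set w | X i.+1 w - X i w = (-1, 0)] `|`
  [set w | X i.+1 w - X i w = (0, 1)] `|` [set w | X i.+1 w - X i w = (0, -1)].
Proof.
apply/seteqP; split => w; rewrite /step_ok /=.
- by rewrite !inE => /or4P [] /eqP ->; [left; left; left|left; left; right|left; right|right].
- by move=> [[[]|]|] ->.
Qed.

Lemma measurable_step_ok i : measurable (step_ok i).
Proof. by rewrite step_okE; repeat apply: measurableU; apply: measurable_increment. Qed.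

Hypothesis x_instr : instruction x.

Lemma prob_not_step_ok i : P (~` step_ok i) = 0%E.
Proof.
have disj a b : a != b ->
    [set w | X i.+1 w - X i w = a] `&` [set w | X i.+1 w - X i w = b] = set0.
  by move=> ab; apply/seteqP; split => w //= [ea eb]; rewrite -ea -eb eqxx in ab.
rewrite probability_setC; last exact: measurable_step_ok.
rewrite step_okE.
have m_increment := measurable_increment.
rewrite !measureU ?setIUl ?disj ?setU0 //; try by repeat apply: measurableU.
case: walk => _ law _.
have {}law dz : (P : {content set T -> \bar R}) [set w | X i.+1 w - X i w = dz] =
  (step_prob p x i dz)%:E := law i dz.
rewrite !law -!EFinD.
have := sum_step_prob p (x_instr i); rewrite !big_ord_recr big_ord0 /= add0r => ->.
by rewrite subrr.
Qed.

Definition init_law y := fine (P [set w | X 0 w = y]).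

Lemma init_lawE y : P [set w | X 0 w = y] = (init_law y)%:E.
Proof. by rewrite /init_law fineK // fin_num_measure //; exact: (measurable_X 0 [set y]). Qed.

Lemma init_law_ge0 y : 0 <= init_law y.
Proof. exact: fine_ge0. Qed.

Hypothesis p01 : 0 <= p <= 1.

Definition path_weight s (a : {ffun 'I_s -> 'I_4}) :=
  \prod_(i < s) step_prob p x i (steps_of a i).

Lemma path_weight_ge0 s (a : {ffun 'I_s -> 'I_4}) : 0 <= path_weight a.
Proof. by apply: prodr_ge0 => i _; apply: step_prob_ge0. Qed.

Variables (tau t1 t2 : nat) (z : Z2).

(* X_0 is chosen so that X_s = z on the cylinder. *)
Definition cylinder s (a : {ffun 'I_s -> 'I_4}) (b : {ffun 'I_tau -> 'I_4}) :=
  [set w | X 0 w = z - displacement a /\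
           forall i, (i < s + tau)%N -> X i.+1 w - X i w = cat_steps a b i].

Definition cylinder_prob s (a : {ffun 'I_s -> 'I_4}) (b : {ffun 'I_tau -> 'I_4}) :=
  init_law (z - displacement a) * path_weight a *
  \prod_(i < tau) step_prob p (fun t => x (s + t)%N) i (nth (0 : Z2) steps (b i)).

Lemma measurable_cylinder s a b : measurable (@cylinder s a b).
Proof. exact: measurable_increments. Qed.

Lemma prob_cylinder s a b : P (@cylinder s a b) = (cylinder_prob a b)%:E.
Proof.
case: walk => _ _ indep; rewrite indep init_lawE -EFinM /cylinder_prob -mulrA.
congr (_ * _)%:E.
rewrite big_split_ord; congr (_ * _); apply: eq_bigr => i _; rewrite /cat_steps /=.
- by rewrite ltn_ord.
- by rewrite ltnNge leq_addr /= addKn steps_of_ord /step_prob addnS.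
Qed.

Lemma sum_cylinder_prob s (a : {ffun 'I_s -> 'I_4}) :
  \sum_b cylinder_prob a b = init_law (z - displacement a) * path_weight a.
Proof.
by rewrite -mulr_sumr sum_prod_step_prob ?mulr1 //; apply: instruction_shift.
Qed.

Lemma sum_cylinder_prob_visits0 s (a : {ffun 'I_s -> 'I_4}) :
  \sum_b cylinder_prob a b * (visits0 b)%:R =
  init_law (z - displacement a) * path_weight a * exp_visits0 p (fun t => x (s + t)%N) tau.
Proof. by rewrite /exp_visits0 mulr_sumr; apply: eq_bigr => b _; rewrite mulrA. Qed.

Lemma cylinder_increments s a b w : @cylinder s a b w ->
  (forall i : 'I_s, X i.+1 w - X i w = nth (0 : Z2) steps (a i)) /\
  (forall i : 'I_tau, X (s + i).+1 w - X (s + i)%N w = nth (0 : Z2) steps (b i)).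
Proof.
move=> [_ inc]; split => i.
- rewrite inc; last exact: leq_trans (ltn_ord i) (leq_addr _ _).
  by rewrite /cat_steps ltn_ord steps_of_ord.
- rewrite inc ?ltn_add2l //.
  by rewrite /cat_steps ltnNge leq_addr /= addKn steps_of_ord.
Qed.

Lemma cylinder_X_before s a b w t : (t <= s)%N -> @cylinder s a b w ->
  X t w = z - displacement a + \sum_(i < t) steps_of a i.
Proof.
move=> le_ts cyl; have [inc_a _] := cylinder_increments cyl.
have -> : X t w = X 0 w + \sum_(i < t) (X i.+1 w - X i w) := telescope_shift (X^~ w) 0 t.
rewrite (proj1 cyl); congr (_ + _); apply: eq_bigr => i _.
by rewrite (steps_of_lt a (leq_trans (ltn_ord i) le_ts)) -inc_a.
Qed.

Lemma cylinder_X_at s a b w : @cylinder s a b w -> X s w = z.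
Proof. by move=> cyl; rewrite (cylinder_X_before (leqnn s) cyl) subrK. Qed.

Lemma cylinder_X_after s a b w t : (t <= tau)%N -> @cylinder s a b w ->
  X (s + t)%N w = z + partial_sum b t.
Proof.
move=> le_t cyl; have [_ inc_b] := cylinder_increments cyl.
rewrite (telescope_shift (X^~ w) s t) (cylinder_X_at cyl); congr (_ + _).
rewrite /partial_sum (big_ord_widen _ (fun i => X (s + i).+1 w - X (s + i)%N w) le_t).
by apply: eq_bigr => i _; rewrite inc_b.
Qed.

Lemma cylinder_inj s a a' b b' w :
  @cylinder s a b w -> @cylinder s a' b' w -> a = a' /\ b = b'.
Proof.
move=> /cylinder_increments [inc_a inc_b] /cylinder_increments [inc_a' inc_b'].
split; apply/ffunP => i; apply: nth_steps_inj => /=.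
- by rewrite -inc_a -inc_a'.
- by rewrite -inc_b -inc_b'.
Qed.

Definition first_visit_at s w : bool :=
  (X s w == z) && [forall t : 'I_s, (t1 <= t)%N ==> (X t w != z)].

Lemma first_visit_at_uniq s s' w : (t1 <= s)%N -> (t1 <= s')%N ->
  first_visit_at s w -> first_visit_at s' w -> s = s'.
Proof.
move=> t1s t1s' /andP [/eqP X_s fresh] /andP [/eqP X_s' fresh'].
apply/eqP; rewrite eqn_leq; apply/andP; split; rewrite leqNgt; apply/negP => lt.
- by have := forallP fresh (Ordinal lt); rewrite /= t1s' X_s' eqxx.
- by have := forallP fresh' (Ordinal lt); rewrite /= t1s X_s eqxx.
Qed.

Lemma cylinder_first_visit s a b w :
  first_visit_path t1 a -> @cylinder s a b w -> first_visit_at s w.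
Proof.
move=> /forallP fresh cyl; rewrite /first_visit_at (cylinder_X_at cyl) eqxx /=.
apply/forallP => t; apply/implyP => t1t.
rewrite (cylinder_X_before (ltnW (ltn_ord t)) cyl).
apply: contra (implyP (fresh t) t1t) => /eqP X_t; apply/eqP.
by rewrite -(addKr (z - displacement a) (\sum_(i < t) steps_of a i)) X_t opprB subrK.
Qed.

Lemma first_visit_cylinder s w :
  (forall i, (i < s + tau)%N -> X i.+1 w - X i w \in steps) -> first_visit_at s w ->
  exists a b, first_visit_path t1 a /\ @cylinder s a b w.
Proof.
move=> ok /andP [/eqP X_s /forallP fresh].
pose a := [ffun i : 'I_s => step_index (X i.+1 w - X i w)].
pose b := [ffun i : 'I_tau => step_index (X (s + i).+1 w - X (s + i)%N w)].
have inc_a (i : 'I_s) : nth (0 : Z2) steps (a i) = X i.+1 w - X i w.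
  by rewrite ffunE nth_step_index // ok // ltn_addr.
have inc_b (i : 'I_tau) : nth (0 : Z2) steps (b i) = X (s + i).+1 w - X (s + i)%N w.
  by rewrite ffunE nth_step_index // ok // ltn_add2l.
have sum_a t : (t <= s)%N -> \sum_(i < t) steps_of a i = X t w - X 0 w.
  move=> le_ts.
  have -> : X t w = X 0 w + \sum_(i < t) (X i.+1 w - X i w) := telescope_shift (X^~ w) 0 t.
  rewrite addrC addKr; apply: eq_bigr => i _.
  by rewrite (steps_of_lt a (leq_trans (ltn_ord i) le_ts)) inc_a.
exists a, b; split.
  apply/forallP => t; apply/implyP => t1t.
  rewrite /displacement !sum_a ?(ltnW (ltn_ord t)) // X_s.
  by apply: contra (implyP (fresh t) t1t) => /eqP/addIr/eqP.
split; first by rewrite /displacement sum_a // X_s opprB addrC subrK.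
move=> i lt_i; rewrite /cat_steps; case: ltnP => [lt_is|le_si].
  by rewrite (steps_of_lt a lt_is) inc_a.
have lt_i' : (i - s < tau)%N by rewrite ltn_subLR.
by rewrite (steps_of_lt b lt_i') inc_b /= subnKC.
Qed.

Definition visit_set := [set w | exists2 t, (t1 <= t <= t2)%N & X t w = z].

Lemma measurable_visit_set : measurable visit_set.
Proof.
have -> : visit_set =
    \bigcup_t (if (t1 <= t <= t2)%N then X t @^-1` [set z] else set0).
  apply/seteqP; split => w /=.
  - by move=> [t t_in X_t]; exists t => //; rewrite t_in.
  - by move=> [t _]; case: ifP => // t_in X_t; exists t.
apply: bigcupT_measurable => t.
by case: ifP => _; [apply: measurable_X | apply: measurable0].
Qed.

Lemma visit_set_first_visit w : visit_set w ->
  exists2 s, (t1 <= s <= t2)%N & first_visit_at s w.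
Proof.
move=> [t t_in X_t].
have ex_visit : exists t, (t1 <= t <= t2)%N && (X t w == z).
  by exists t; rewrite t_in X_t eqxx.
case: (ex_minnP ex_visit) => s /andP [s_in /eqP X_s] s_min; exists s => //.
rewrite /first_visit_at X_s eqxx /=; apply/forallP => t'; apply/implyP => t1t'.
apply/negP => /eqP X_t'; have := s_min t'; case/andP: s_in => _ st2.
rewrite t1t' X_t' eqxx (leq_trans (ltnW (ltn_ord t')) st2) leqNgt ltn_ord.
by move/(_ isT).
Qed.

(* The first sum vanishes almost surely; it covers the null event where an
   increment is not a unit step, which lies in no cylinder. *)
Lemma indic_visit_le w : (\1_visit_set w : R) <=
  \sum_(i < t2 + tau) (\1_(~` step_ok i) w : R) +
  \sum_(s <- index_iota t1 t2.+1) \sum_(a : {ffun 'I_s -> 'I_4})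
    \sum_(b : {ffun 'I_tau -> 'I_4})
      (first_visit_path t1 a)%:R * (\1_(cylinder a b) w : R).
Proof.
have indic_ge0 (A : set T) : 0 <= (\1_A w : R) by rewrite indicE.
have bad_ge0 : 0 <= \sum_(i < t2 + tau) (\1_(~` step_ok i) w : R).
  by apply: sumr_ge0.
have term_ge0 s (a : {ffun 'I_s -> 'I_4}) (b : {ffun 'I_tau -> 'I_4}) :
  0 <= (first_visit_path t1 a)%:R * (\1_(cylinder a b) w : R) by rewrite mulr_ge0.
have cyl_ge0 : 0 <= \sum_(s <- index_iota t1 t2.+1) \sum_(a : {ffun 'I_s -> 'I_4})
    \sum_(b : {ffun 'I_tau -> 'I_4}) (first_visit_path t1 a)%:R * (\1_(cylinder a b) w : R).
  by do 3!apply: sumr_ge0 => ? _.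
rewrite indicE; have [/set_mem visit|_] := boolP (w \in visit_set); last first.
  by rewrite addr_ge0.
have [[i bad]|all_ok] := pselect (exists i : 'I_(t2 + tau), ~ step_ok i w).
  rewrite -[1%:R]addr0 lerD //.
  apply: le_trans _ (ler_sum_fin i (fun j => indic_ge0 _)).
  by rewrite indicE mem_set.
have ok i : (i < t2 + tau)%N -> X i.+1 w - X i w \in steps.
  by move=> lt_i; apply: contrapT => nok; apply: all_ok; exists (Ordinal lt_i).
have [s /andP [t1s st2] first] := visit_set_first_visit visit.
have ok_s i : (i < s + tau)%N -> X i.+1 w - X i w \in steps.
  by move=> lt_i; apply: ok; apply: leq_trans lt_i _; rewrite leq_add2r.
have [a [b [fresh cyl]]] := first_visit_cylinder ok_s first.
have s_in : s \in index_iota t1 t2.+1 by rewrite mem_index_iota t1s ltnS.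
rewrite -[1%:R]add0r lerD //.
apply: le_trans _ (ler_sum_mem (iota_uniq _ _) s_in _) => [|s'].
  apply: le_trans _ (ler_sum_fin a _) => [|a']; last by apply: sumr_ge0.
  apply: le_trans _ (ler_sum_fin b (term_ge0 s a)).
  by rewrite fresh indicE mem_set // mul1r.
by do 2!apply: sumr_ge0 => ? _.
Qed.

Lemma cylinder_visits_at s w :
  \sum_(a : {ffun 'I_s -> 'I_4}) \sum_(b : {ffun 'I_tau -> 'I_4})
     (first_visit_path t1 a)%:R * (visits0 b)%:R * (\1_(cylinder a b) w : R)
  <= (first_visit_at s w * \sum_(t < tau.+1) (X (s + t)%N w == z))%N%:R.
Proof.
have [[a0 [b0 [fresh0 cyl0]]]|none] :=
  pselect (exists a b, first_visit_path t1 a /\ @cylinder s a b w); last first.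
  rewrite big1 ?ler0n // => a _; rewrite big1 // => b _.
  have [fresh|] := boolP (first_visit_path t1 a); last by rewrite !mul0r.
  rewrite indicE memNset ?mulr0 // => cyl.
  by apply: none; exists a, b.
rewrite (bigD1 a0) //= [X in _ + X <= _]big1 ?addr0 => [|a ne_a]; last first.
  apply: big1 => b _; rewrite indicE memNset ?mulr0 // => cyl.
  by case: (cylinder_inj cyl cyl0) => eq_a _; rewrite eq_a eqxx in ne_a.
rewrite (bigD1 b0) //= [X in _ + X <= _]big1 ?addr0 => [|b ne_b]; last first.
  rewrite indicE memNset ?mulr0 // => cyl.
  by case: (cylinder_inj cyl cyl0) => _ eq_b; rewrite eq_b eqxx in ne_b.
rewrite fresh0 (cylinder_first_visit fresh0 cyl0) indicE mem_set //.
rewrite mul1r mulr1 mul1n ler_nat; apply/eq_leq/eq_bigr => t _.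
rewrite (cylinder_X_after (ltn_ord t : (t <= tau)%N) cyl0).
by rewrite -{2}(addr0 z) (inj_eq (addrI z)).
Qed.

Lemma cylinder_visits_le w :
  \sum_(s <- index_iota t1 t2.+1) \sum_(a : {ffun 'I_s -> 'I_4})
    \sum_(b : {ffun 'I_tau -> 'I_4})
      (first_visit_path t1 a)%:R * (visits0 b)%:R * (\1_(cylinder a b) w : R)
  <= (\sum_(t1 <= t < (t2 + tau).+1) (X t w == z))%N%:R.
Proof.
apply: le_trans (ler_sum _ (fun s _ => cylinder_visits_at s w)) _.
rewrite -natr_sum ler_nat.
have [[s0 s0_in first0]|none] := pselect
  (exists2 s0, s0 \in index_iota t1 t2.+1 & first_visit_at s0 w); last first.
  rewrite big1_seq // => s /andP [_ s_in].
  by case: (boolP (first_visit_at s w)) => // first; case: none; exists s.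
move: (s0_in); rewrite mem_index_iota => /andP [t1s0 s0t2].
rewrite (bigD1_seq s0) ?iota_uniq //= [X in (_ + X <= _)%N]big1_seq ?addn0;
  last move=> s /andP [ne_s s_in].
  rewrite first0 mul1n.
  by apply: (leq_sum_window (fun t => (X t w == z) : nat)) => //; lia.
case: (boolP (first_visit_at s w)) => // first.
move: s_in; rewrite mem_index_iota => /andP [t1s _].
by rewrite (first_visit_at_uniq t1s t1s0 first first0) eqxx in ne_s.
Qed.

Lemma integral_cylinder_sum
    (c : forall s, {ffun 'I_s -> 'I_4} -> {ffun 'I_tau -> 'I_4} -> R) :
  (forall s a b, 0 <= c s a b) ->
  (\int[P]_w (\sum_(s <- index_iota t1 t2.+1) \sum_(a : {ffun 'I_s -> 'I_4})
      \sum_(b : {ffun 'I_tau -> 'I_4}) c s a b * (\1_(cylinder a b) w : R))%:E =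
   (\sum_(s <- index_iota t1 t2.+1) \sum_(a : {ffun 'I_s -> 'I_4})
      \sum_(b : {ffun 'I_tau -> 'I_4}) c s a b * cylinder_prob a b)%:E)%E.
Proof.
move=> c_ge0.
have m_term s a b : measurable_fun [set: T] (fun w => c s a b * (\1_(@cylinder s a b) w : R)).
  exact/measurable_scale_indic/measurable_cylinder.
have term_ge0 s a b w : 0 <= c s a b * (\1_(@cylinder s a b) w : R).
  by rewrite mulr_ge0 ?indicE.
rewrite integral_sum_EFin; last 2 first.
- by move=> s; do 2!apply: measurable_sum => ?; apply: m_term.
- by move=> s w; do 2!apply: sumr_ge0 => ? _; apply: term_ge0.
rewrite -sumEFin; apply: eq_bigr => s _.
rewrite integral_sum_EFin; last 2 first.
- by move=> a; apply: measurable_sum => ?; apply: m_term.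
- by move=> a w; apply: sumr_ge0 => ? _; apply: term_ge0.
rewrite -sumEFin; apply: eq_bigr => a _.
rewrite integral_sum_EFin; last 2 first.
- exact: m_term.
- exact: term_ge0.
rewrite -sumEFin; apply: eq_bigr => b _.
rewrite integral_scale_indic //; last exact: measurable_cylinder.
by rewrite EFinM; congr (_ * _)%E; apply: prob_cylinder.
Qed.

Definition first_visit_mass :=
  \sum_(s <- index_iota t1 t2.+1) \sum_(a : {ffun 'I_s -> 'I_4})
    (first_visit_path t1 a)%:R * (init_law (z - displacement a) * path_weight a).

Lemma prob_visit_le : (P visit_set <= first_visit_mass%:E)%E.
Proof.
pose bad w := \sum_(i < t2 + tau) (\1_(~` step_ok i) w : R).
pose hit w := \sum_(s <- index_iota t1 t2.+1) \sum_(a : {ffun 'I_s -> 'I_4})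
  \sum_(b : {ffun 'I_tau -> 'I_4}) (first_visit_path t1 a)%:R * (\1_(cylinder a b) w : R).
have m_bad : measurable_fun [set: T] bad.
  apply: measurable_sum => i.
  exact/measurable_indic/measurableC/measurable_step_ok.
have m_hit : measurable_fun [set: T] hit.
  by do 3!apply: measurable_sum => ?; apply/measurable_scale_indic/measurable_cylinder.
have bad_ge0 w : 0 <= bad w by apply: sumr_ge0 => i _; rewrite indicE.
have hit_ge0 w : 0 <= hit w by do 3!apply: sumr_ge0 => ? _; rewrite mulr_ge0 ?indicE.
have -> : P visit_set = (\int[P]_w (\1_visit_set w)%:E)%E.
  by rewrite integral_indic ?setIT //; apply: measurable_visit_set.
apply: (@le_trans _ _ (\int[P]_w (bad w + hit w)%:E)%E).
  apply: ge0_le_integral => //.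
  - exact/measurable_EFinP/measurable_indic/measurable_visit_set.
  - exact/measurable_EFinP/measurable_funD.
  - by move=> w _; rewrite lee_fin; apply: indic_visit_le.
under eq_integral do rewrite EFinD.
rewrite ge0_integralD //; last 4 first.
- by move=> w _; rewrite lee_fin.
- exact/measurable_EFinP.
- by move=> w _; rewrite lee_fin.
- exact/measurable_EFinP.
rewrite integral_sum_EFin; last 2 first.
- by move=> i; apply/measurable_indic/measurableC/measurable_step_ok.
- by move=> i w; rewrite indicE.
rewrite big1 ?add0e => [|i _]; last first.
  rewrite integral_indic ?setIT //; first exact: prob_not_step_ok.
  by apply: measurableC; apply: measurable_step_ok.
rewrite (integral_cylinder_sum (c := fun s a b => (first_visit_path t1 a)%:R)) //.
rewrite lee_fin le_eqVlt; apply/predU1l; apply: eq_bigr => s _; apply: eq_bigr => a _.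
by rewrite -mulr_sumr sum_cylinder_prob.
Qed.

Lemma measurable_visit_count : measurable_fun [set: T]
  (fun w => ((\sum_(t1 <= t < (t2 + tau).+1) (X t w == z))%N%:R : R)).
Proof.
have -> : (fun w => ((\sum_(t1 <= t < (t2 + tau).+1) (X t w == z))%N%:R : R)) =
    (fun w => \sum_(t1 <= t < (t2 + tau).+1) (\1_(X t @^-1` [set z]) w : R)).
  apply: funext => w; rewrite natr_sum; apply: eq_bigr => t _; rewrite indicE.
  by case: (X t w =P z) => [X_t|X_t]; [rewrite mem_set | rewrite memNset].
by apply: measurable_sum => t; apply/measurable_indic/measurable_X.
Qed.

Lemma first_visit_mass_Rtau_le : ((first_visit_mass * Rtau p tau)%:E <=
  \int[P]_w ((\sum_(t1 <= t < (t2 + tau).+1) (X t w == z))%N%:R)%:E)%E.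
Proof.
pose hit w := \sum_(s <- index_iota t1 t2.+1) \sum_(a : {ffun 'I_s -> 'I_4})
  \sum_(b : {ffun 'I_tau -> 'I_4})
    (first_visit_path t1 a)%:R * (visits0 b)%:R * (\1_(cylinder a b) w : R).
have m_hit : measurable_fun [set: T] hit.
  by do 3!apply: measurable_sum => ?; apply/measurable_scale_indic/measurable_cylinder.
have hit_ge0 w : 0 <= hit w by do 3!apply: sumr_ge0 => ? _; rewrite !mulr_ge0 ?indicE.
apply: (@le_trans _ _ (\int[P]_w (hit w)%:E)%E); last first.
  apply: ge0_le_integral => //.
  - by move=> w _; rewrite lee_fin.
  - exact/measurable_EFinP.
  - exact/measurable_EFinP/measurable_visit_count.
  - by move=> w _; rewrite lee_fin; apply: cylinder_visits_le.
rewrite (integral_cylinder_sum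
  (c := fun s a b => (first_visit_path t1 a)%:R * (visits0 b)%:R)); last first.
  by move=> s a b; rewrite mulr_ge0.
rewrite lee_fin /first_visit_mass mulr_suml; apply: ler_sum => s _.
rewrite mulr_suml; apply: ler_sum => a _.
under eq_bigr do rewrite mulrAC -mulrA.
rewrite -mulr_sumr sum_cylinder_prob_visits0 -!mulrA.
apply: ler_wpM2l => //; apply: ler_wpM2l; first exact: init_law_ge0.
apply: ler_wpM2l; first exact: path_weight_ge0.
have Rtau_le_shift := Rtau_le p01 tau (instruction_shift s x_instr).
exact: Rtau_le_shift.
Qed.

End GuidedWalk.

Theorem proposition2 (R : realType) (p : R) (tau : nat)
    (d : measure_display) (T : measurableType d) (P : probability T R)
    (x : nat -> Z2) (X : nat -> T -> Z2) (t1 t2 : nat) (z : Z2) :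
  (0 < tau)%N -> 0 <= p <= 1 -> (t1 <= t2)%N ->
  instruction x -> guided_random_walk P p x X ->
  (P [set w | exists2 t, (t1 <= t <= t2)%N & X t w = z]
   <= (\int[P]_w ((\sum_(t1 <= t < (t2 + tau).+1) (X t w == z))%N%:R)%:E)
      * ((Rtau p tau)^-1)%:E)%E.
Proof.
move=> _ p01 _ x_instr walk.
have Rtau_gt0 : 0 < Rtau p tau := lt_le_trans ltr01 (Rtau_ge1 p01 tau x_instr).
apply: le_trans (prob_visit_le walk x_instr tau t1 t2 z) _.
rewrite -(mulfK (lt0r_neq0 Rtau_gt0) (first_visit_mass _ _ _ _ _ _ _)) EFinM.
apply: lee_wpmul2r; first by rewrite lee_fin invr_ge0 ltW.
exact: first_visit_mass_Rtau_le.
Qed.
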